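(* Let $p_{NS}\in(0,1)$ and let $p_0$ be such that $p_{NS}=p_0(1-p_0)^{(1-p_0)/p_0}$. Let $P$ be a probability distribution on a finite set $\mathcal{I}$ with $\min_{i\in\sup(P)}P(i)\ge p_{NS}$. Then for every minimizer $Q^*$ of $\mathrm{KL}_b(P\|\cdot)$ over semi-distributions and every $i\in\sup(Q^* )$, $$\frac{Q^*(i)}{P(i)}\le\frac{p_0}{(1-p_0)p_{NS}}<\frac{3}{1-p_0}.$$
   Context: A semi-distribution on $\mathcal{I}$ is $W:\mathcal{I}\to[0,1]$ with $\sum_iW(i)\le1$ and support $\sup(W)=\{i:W(i)>0\}$; a probability distribution is one summing to $1$. Bounded KL with threshold $p_{NS}$: $\mathrm{KL}_b(P\|Q):=\sum_{i\in\sup(P)}P(i)\ln\frac{P(i)}{\max(Q(i),p_{NS})}$. *)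

From HB Require Import structures.
From mathcomp Require Import all_boot all_order all_algebra.
From mathcomp Require Import all_classical all_reals all_analysis.
Set Implicit Arguments. Unset Strict Implicit. Unset Printing Implicit Defensive.
Import Order.TTheory GRing.Theory Num.Theory.
Local Open Scope ring_scope.

Definition semi_distribution (R : realType) (I : finType) (W : I -> R) : Prop :=
  (forall i, 0 <= W i <= 1) /\ \sum_(i : I) W i <= 1.

Definition prob_distribution (R : realType) (I : finType) (W : I -> R) : Prop :=
  (forall i, 0 <= W i <= 1) /\ \sum_(i : I) W i = 1.

Definition supp (R : realType) (I : finType) (W : I -> R) : pred I :=
  fun i => 0 < W i.

Definition KLb (R : realType) (I : finType) (pNS : R) (P Q : I -> R) : R :=
  \sum_(i in supp P) P i * ln (P i / Num.max (Q i) pNS).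

Definition KLb_minimizer (R : realType) (I : finType) (pNS : R) (P Q : I -> R) : Prop :=
  semi_distribution Q /\
  forall W : I -> R, semi_distribution W -> KLb pNS P Q <= KLb pNS P W.

(* Let U be the set of indices of sup(P) where Q* lies above the threshold, so
   that KL_b(P || Q* ) sees Q* itself there, and let s = P(U).  Test minimality
   of Q* against the competitor that spreads mass 1 - q over U proportionally to
   P and puts mass q on some j in sup(P) outside U.  For q = 0 the equality case
   of Gibbs' inequality forces Q* = P / s on U.  For q = p0, using this, it gives
   s ln (1 / (1 - p0)) >= p_NS ln (p0 / p_NS), and by the choice of p0 the
   right-hand side is (1 - p0)^(1/p0) ln (1 / (1 - p0)); hence
   s >= (1 - p0)^(1/p0) = (1 - p0) p_NS / p0 (trivially if U covers sup(P), as
   then s = 1).  Off U the ratio Q*(i)/P(i) is at most p_NS / P(i) <= 1.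
   Finally (1 - p0)^(-(1 - p0)/p0) <= e < 3 since -ln (1 - p0) <= p0 / (1 - p0). *)

From mathcomp Require Import all_boot all_order all_algebra.
From mathcomp Require Import all_classical all_reals all_analysis.
From mathcomp Require Import ring lra.
Import Order.TTheory GRing.Theory Num.Theory.
Local Open Scope ring_scope.

Section Gibbs.
Context {R : realType}.

Lemma subr_lt_mul_ln_div {a b : R} : 0 < a -> 0 < b -> a != b ->
  a - b < a * ln (a / b).
Proof.
move=> a_gt0 b_gt0 ab.
have ba_gt0 : 0 < b / a by rewrite divr_gt0.
have ln_ba_neq0 : ln (b / a) != 0.
  apply: contra ab; rewrite ln_eq0 // => /eqP ba1.
  by rewrite -(divfK (lt0r_neq0 a_gt0) b) ba1 mul1r.
have : ln (b / a) < b / a - 1.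
  by have := expR_gt1Dx ln_ba_neq0; rewrite lnK ?posrE //; lra.
rewrite -[a / b]invf_div lnV ?posrE // mulrN -(ltr_pM2l a_gt0) mulrBr mulr1.
by rewrite mulrCA mulfV ?gt_eqF // mulr1; lra.
Qed.

Lemma subr_le_mul_ln_div {a b : R} : 0 < a -> 0 < b -> a - b <= a * ln (a / b).
Proof.
move=> a_gt0 b_gt0; have [<-|ab] := eqVneq a b.
  by rewrite subrr divff ?gt_eqF // ln1 mulr0.
exact/ltW/subr_lt_mul_ln_div.
Qed.

Lemma gibbs_eq {I : finType} {A : pred I} {a b : I -> R} :
  {in A, forall k, 0 < a k} -> {in A, forall k, 0 < b k} ->
  \sum_(k in A) b k <= \sum_(k in A) a k ->
  \sum_(k in A) a k * ln (a k / b k) <= 0 ->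
  {in A, a =1 b}.
Proof.
move=> a_gt0 b_gt0 sum_b_le sum_le0.
pose g k := a k * ln (a k / b k) - (a k - b k).
have g_ge0 k : k \in A -> 0 <= g k.
  by move=> Ak; rewrite subr_ge0 subr_le_mul_ln_div ?a_gt0 ?b_gt0.
have sum_g0 : \sum_(k in A) g k = 0.
  apply/eqP; rewrite eq_le sumr_ge0 ?andbT //.
  rewrite sumrB sumrB; lra.
move=> k Ak; apply/eqP/negPn/negP => ab.
have := subr_lt_mul_ln_div (a_gt0 _ Ak) (b_gt0 _ Ak) ab.
by rewrite -subr_gt0 -/(g k) (psumr_eq0P g_ge0 sum_g0 Ak) ltxx.
Qed.

End Gibbs.

Lemma in_supp (R : realType) (I : finType) (W : I -> R) k :
  (k \in supp W) = (0 < W k).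
Proof. by []. Qed.

Lemma ln_max_div_ge0 (R : realType) (c x : R) : 0 < c ->
  0 <= ln (Num.max x c / c).
Proof. by move=> c_gt0; rewrite ln_ge0 // ler_pdivlMr // mul1r le_max lexx orbT. Qed.

Definition unclipped {R : realType} {I : finType} (pNS : R) (P Q : I -> R) :
  pred I := [pred k | (0 < P k) && (pNS < Q k)].

Definition unclipped_mass {R : realType} {I : finType} (pNS : R) (P Q : I -> R) :=
  \sum_(k in unclipped pNS P Q) P k.

Lemma in_unclipped (R : realType) (I : finType) (pNS : R) (P Q : I -> R) k :
  (k \in unclipped pNS P Q) = (0 < P k) && (pNS < Q k).
Proof. by []. Qed.

Section Minimizer.
Context {R : realType} {I : finType} {pNS : R} {P Q : I -> R}.
Hypotheses (pNS_gt0 : 0 < pNS) (P_dist : prob_distribution P)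
  (P_ge : forall i, i \in supp P -> pNS <= P i) (Q_min : KLb_minimizer pNS P Q).

Local Notation unclipped := (unclipped pNS P Q).
Local Notation unclipped_mass := (unclipped_mass pNS P Q).

Let P_ge0 k : 0 <= P k. Proof. by case/andP: (P_dist.1 k). Qed.
Let Q_ge0 k : 0 <= Q k. Proof. by case/andP: (Q_min.1.1 k). Qed.
Let max_gt0 x : 0 < Num.max x pNS.
Proof. by rewrite lt_max pNS_gt0 orbT. Qed.

Lemma KLb_minimizer_gain_le0 {W : I -> R} : semi_distribution W ->
  \sum_(k in supp P) P k * ln (Num.max (W k) pNS / Num.max (Q k) pNS) <= 0.
Proof.
move=> W_semi; have := Q_min.2 W W_semi; rewrite /KLb -subr_le0 -sumrB.
congr (_ <= 0); apply: eq_bigr => k Pk; rewrite -mulrBr; congr (_ * _).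
by rewrite !ln_div ?posrE ?max_gt0 //; ring.
Qed.

Lemma unclipped_gain_le0 {W : I -> R} :
  semi_distribution W -> {in unclipped, forall k, 0 < W k} ->
  \sum_(k in unclipped) P k * ln (W k / Q k) +
  \sum_(k in supp P | k \notin unclipped) P k * ln (Num.max (W k) pNS / pNS) <= 0.
Proof.
move=> W_semi W_gt0; apply: (le_trans _ (KLb_minimizer_gain_le0 W_semi)).
rewrite [X in _ <= X](bigID (mem unclipped)) /=; apply: lerD.
  rewrite [X in _ <= X](eq_bigl (mem unclipped)) => [|k]; last first.
    by rewrite /= in_unclipped in_supp; case: (0 < P k).
  apply: ler_sum => k; rewrite in_unclipped => /andP[Pk Qk].
  have Q_gt0 : 0 < Q k := lt_trans pNS_gt0 Qk.
  have W_gt0k : 0 < W k by rewrite W_gt0 // in_unclipped Pk.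
  rewrite (max_l (ltW Qk)) ler_pM2l // ler_ln ?posrE ?divr_gt0 //.
  by rewrite ler_pM2r ?invr_gt0 // le_max lexx.
apply: ler_sum => k /andP[Pk Uk].
have Q_le : Q k <= pNS by move: Uk; rewrite in_unclipped -in_supp Pk /= -leNgt.
by rewrite (max_r Q_le).
Qed.

Lemma le_unclipped_mass : {in unclipped, forall k, P k <= unclipped_mass}.
Proof.
by move=> k Uk; rewrite /unclipped_mass (bigD1 k) //= lerDl sumr_ge0.
Qed.

Lemma unclipped_mass_gt0 {k : I} : k \in unclipped -> 0 < unclipped_mass.
Proof.
by move=> Uk; apply: (lt_le_trans _ (le_unclipped_mass _ Uk)); case/andP: Uk.
Qed.

Lemma sum_unclipped_div_mass_le1 : \sum_(k in unclipped) P k / unclipped_mass <= 1.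
Proof.
rewrite -mulr_suml; have [->|mass_neq0] := eqVneq unclipped_mass 0.
  by rewrite invr0 mulr0 ler01.
by rewrite divff.
Qed.

Definition competitor (q : R) (j : I) (k : I) : R :=
  (if k \in unclipped then (1 - q) * (P k / unclipped_mass) else 0) +
  (if k == j then q else 0).

Lemma competitor_semi q j : 0 <= q <= 1 -> semi_distribution (competitor q j).
Proof.
move=> /andP[q_ge0 q_le1]; split=> [k|].
  rewrite /competitor; case: ifPn => [Uk|_]; last by case: eqP => _; apply/andP; lra.
  have mass_gt0 := unclipped_mass_gt0 Uk.
  have ratio_le1 : P k / unclipped_mass <= 1.
    by rewrite ler_pdivrMr // mul1r le_unclipped_mass.
  have ratio_ge0 : 0 <= P k / unclipped_mass by rewrite divr_ge0 ?P_ge0 ?ltW.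
  by case: eqP => _; apply/andP; split; nra.
rewrite /competitor big_split /= -!big_mkcond big_pred1_eq -mulr_sumr.
have := sum_unclipped_div_mass_le1; nra.
Qed.

Lemma competitor_gt0 q j : 0 <= q < 1 -> {in unclipped, forall k, 0 < competitor q j k}.
Proof.
move=> /andP[q_ge0 q_lt1] k Uk; have mass_gt0 := unclipped_mass_gt0 Uk.
have ratio_gt0 : 0 < P k / unclipped_mass by rewrite divr_gt0 //; case/andP: Uk.
by rewrite /competitor Uk; case: eqP => _; nra.
Qed.

Lemma competitor_gain_le0 q j : 0 <= q < 1 ->
  \sum_(k in unclipped) P k * ln (competitor q j k / Q k) +
  \sum_(k in supp P | k \notin unclipped)
    P k * ln (Num.max (competitor q j k) pNS / pNS) <= 0.
Proof.
move=> q_bounds; have /andP[q_ge0 q_lt1] := q_bounds.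
apply: (unclipped_gain_le0 _ (competitor_gt0 q j q_bounds)).
by apply: competitor_semi; rewrite q_ge0 ltW.
Qed.

Lemma unclipped_proportional : {in unclipped, forall k, P k = unclipped_mass * Q k}.
Proof.
move=> i Ui; have mass_gt0 := unclipped_mass_gt0 Ui.
have q_bounds : 0 <= (0 : R) < 1 by rewrite lexx ltr01.
have := competitor_gain_le0 0 i q_bounds.
rewrite (eq_bigr (fun k => P k * ln (P k / (unclipped_mass * Q k)))) => [gain|k Uk];
  last first.
  by rewrite /competitor Uk subr0 mul1r if_same addr0 invfM mulrA.
have clipped_ge0 : 0 <= \sum_(k in supp P | k \notin unclipped)
    P k * ln (Num.max (competitor 0 i k) pNS / pNS).
  by apply: sumr_ge0 => k _; rewrite mulr_ge0 ?ln_max_div_ge0.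
have sum_Q_le1 : \sum_(k in unclipped) Q k <= 1.
  apply: le_trans Q_min.1.2; rewrite [X in _ <= X](bigID (mem unclipped)) /=.
  by rewrite lerDl sumr_ge0.
apply: (gibbs_eq (b := fun k => unclipped_mass * Q k) _ _ _ _ _ Ui).
- by move=> k; case/andP.
- by move=> k /andP[_ Qk]; rewrite mulr_gt0 // (lt_trans pNS_gt0).
- by rewrite -mulr_sumr -[X in _ <= X]mulr1 ler_pM2l.
- lra.
Qed.

Lemma unclipped_mass_bound {q : R} {j : I} :
  pNS < q < 1 -> j \in supp P -> j \notin unclipped ->
  unclipped_mass * ln (1 - q) + pNS * ln (q / pNS) <= 0.
Proof.
move=> /andP[pNS_lt_q q_lt1] Pj Uj.
have q_gt0 : 0 < q := lt_trans pNS_gt0 pNS_lt_q.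
have q_bounds : 0 <= q < 1 by rewrite (ltW q_gt0) q_lt1.
have := competitor_gain_le0 q j q_bounds.
rewrite (eq_bigr (fun k => P k * ln (1 - q))) => [|k Uk]; last first.
  have Qk_gt0 : 0 < Q k by case/andP: Uk => _; apply: lt_trans.
  have mass_gt0 := unclipped_mass_gt0 Uk.
  have kj : (k == j) = false by apply: contraNF Uj => /eqP <-.
  rewrite /competitor Uk kj addr0 (unclipped_proportional _ Uk).
  by congr (_ * ln _); field; rewrite !gt_eqF.
rewrite -mulr_suml -/unclipped_mass.
have j_term : pNS * ln (q / pNS) <= \sum_(k in supp P | k \notin unclipped)
    P k * ln (Num.max (competitor q j k) pNS / pNS).
  rewrite (bigD1 j) /=; last by rewrite Pj Uj.
  have -> : competitor q j j = q by rewrite /competitor (negbTE Uj) eqxx add0r.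
  rewrite (max_l (ltW pNS_lt_q)) -[X in X <= _]addr0 lerD //.
    by rewrite ler_wpM2r ?P_ge // ln_ge0 // ler_pdivlMr // mul1r ltW.
  by rewrite sumr_ge0 // => k _; rewrite mulr_ge0 ?ln_max_div_ge0.
lra.
Qed.

Lemma unclipped_mass_ge q c : pNS < q < 1 -> c <= 1 ->
  c * - ln (1 - q) <= pNS * ln (q / pNS) -> c <= unclipped_mass.
Proof.
move=> q_bounds c_le1 c_le; have /andP[pNS_lt_q q_lt1] := q_bounds.
have nL_gt0 : 0 < - ln (1 - q).
  have q_gt0 : 0 < q := lt_trans pNS_gt0 pNS_lt_q.
  by rewrite oppr_gt0 ln_lt0 //; apply/andP; split; lra.
case: (pickP [pred k | (k \in supp P) && (k \notin unclipped)]) => [j /andP[Pj Uj]|none].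
  have := unclipped_mass_bound q_bounds Pj Uj.
  rewrite -(ler_pM2r nL_gt0); lra.
suff -> : unclipped_mass = 1 by [].
rewrite -P_dist.2 /unclipped_mass big_mkcond /=; apply: eq_bigr => k _.
case: ifPn => // Uk; have := none k; rewrite /= Uk andbT in_supp => /negbT.
by rewrite -leNgt => Pk_le0; apply/le_anti; rewrite Pk_le0 P_ge0.
Qed.

Lemma minimizer_ratio_le i : Q i / P i <= Num.max 1 unclipped_mass^-1.
Proof.
(* If P i = 0 the ratio is 0, by the convention x / 0 = 0. *)
have [Pi_le0|Pi_gt0] := leP (P i) 0.
  have -> : P i = 0 by apply/le_anti; rewrite Pi_le0 P_ge0.
  by rewrite invr0 mulr0 le_max ler01.
have [Ui|Ui] := boolP (i \in unclipped).
  have Qi_gt0 : 0 < Q i by case/andP: Ui => _; apply: lt_trans.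
  rewrite (unclipped_proportional _ Ui) invfM mulrCA mulfV ?gt_eqF // mulr1.
  by rewrite le_max lexx orbT.
have Qi_le : Q i <= pNS by move: Ui; rewrite in_unclipped Pi_gt0 /= -leNgt.
rewrite le_max ler_pdivrMr // mul1r (le_trans Qi_le) //.
by rewrite P_ge // in_supp.
Qed.

End Minimizer.

Section ThresholdFactor.
Context {R : realType}.

Lemma expR1_lt3 : expR (1 : R) < 3.
Proof.
have exp_sixth : expR (6^-1 : R) < 6 / 5.
  have : 1 - 6^-1 < expR (- 6^-1 : R) by apply: expR_gt1Dx; rewrite oppr_eq0 gt_eqF.
  rewrite expRN -[(expR _)^-1]mul1r ltr_pdivlMr ?expR_gt0 // => h.
  rewrite ltr_pdivlMr //; lra.
have -> : expR (1 : R) = expR (6^-1) ^+ 6 by rewrite -expRM_natl mulfV.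
apply: (@lt_trans _ _ ((6 / 5) ^+ 6)); first by rewrite ltrXn2r ?expR_ge0.
by rewrite expr_div_n ltr_pdivrMr ?exprn_gt0 // -!natrX -natrM ltr_nat.
Qed.

Definition threshold_factor (p0 : R) := powR (1 - p0) ((1 - p0) / p0).

Context {p0 : R} (p0_bounds : 0 < p0 < 1).

Let p0_gt0 : 0 < p0. Proof. by case/andP: p0_bounds. Qed.
Let q0_gt0 : 0 < 1 - p0. Proof. by case/andP: p0_bounds; rewrite subr_gt0. Qed.

Lemma ln_threshold_factor : ln (threshold_factor p0) = (1 - p0) / p0 * ln (1 - p0).
Proof. exact: ln_powR. Qed.

Lemma threshold_factor_gt0 : 0 < threshold_factor p0.
Proof. exact: powR_gt0. Qed.

Lemma threshold_factor_lt1 : threshold_factor p0 < 1.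
Proof.
rewrite -ltr_ln ?posrE ?threshold_factor_gt0 // ln1 ln_threshold_factor.
by rewrite pmulr_rlt0 ?divr_gt0 // ln_lt0 // q0_gt0 ltrBlDl ltrDr.
Qed.

Lemma threshold_factor_inv_lt3 : (threshold_factor p0)^-1 < 3.
Proof.
have nlnq_le : - ((1 - p0) * ln (1 - p0)) <= p0.
  by have := subr_le_mul_ln_div q0_gt0 ltr01; rewrite divr1; lra.
rewrite -[threshold_factor p0]lnK ?posrE ?threshold_factor_gt0 // -expRN.
apply: le_lt_trans expR1_lt3; rewrite ler_expR ln_threshold_factor.
by rewrite mulrAC -mulNr ler_pdivrMr // mul1r.
Qed.

Lemma threshold_log_identity :
  p0 * threshold_factor p0 * ln (p0 / (p0 * threshold_factor p0)) =
  (1 - p0) * threshold_factor p0 * - ln (1 - p0).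
Proof.
have E_gt0 := threshold_factor_gt0.
rewrite invfM mulrA mulfV ?gt_eqF // mul1r lnV ?posrE // ln_threshold_factor.
by field; rewrite gt_eqF.
Qed.

End ThresholdFactor.

Theorem lemma11 (R : realType) (I : finType) (pNS p0 : R) (P Qs : I -> R) :
  0 < pNS < 1 ->
  0 < p0 < 1 ->
  pNS = p0 * powR (1 - p0) ((1 - p0) / p0) ->
  prob_distribution P ->
  (forall i, i \in supp P -> pNS <= P i) ->
  KLb_minimizer pNS P Qs ->
  forall i, i \in supp Qs ->
    Qs i / P i <= p0 / ((1 - p0) * pNS) /\
    p0 / ((1 - p0) * pNS) < 3 / (1 - p0).
Proof.
move=> /andP[pNS_gt0 _] p0_bounds pNS_def P_dist P_ge Q_min i _.
have /andP[p0_gt0 p0_lt1] := p0_bounds.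
rewrite -/(threshold_factor p0) in pNS_def.
have E_gt0 := threshold_factor_gt0 p0_bounds.
have E_lt1 := threshold_factor_lt1 p0_bounds.
set E := threshold_factor p0 in pNS_def E_gt0 E_lt1.
set c := (1 - p0) * E.
have c_gt0 : 0 < c by rewrite mulr_gt0 // subr_gt0.
have c_le1 : c <= 1 by rewrite /c; nra.
have -> : p0 / ((1 - p0) * pNS) = c^-1.
  by rewrite pNS_def /c; field; rewrite !gt_eqF // subr_gt0.
split; last first.
  rewrite /c invfM mulrC ltr_pM2r ?invr_gt0 ?subr_gt0 //.
  exact: threshold_factor_inv_lt3.
have c_le_mass : c <= unclipped_mass pNS P Qs.
  apply: (unclipped_mass_ge pNS_gt0 P_dist P_ge Q_min p0) => //.
    by rewrite pNS_def gtr_pMr // p0_lt1 andbT.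
  by rewrite pNS_def threshold_log_identity.
apply: le_trans (minimizer_ratio_le pNS_gt0 P_dist P_ge Q_min i) _.
rewrite ge_max invf_ge1 // c_le1 /=.
by rewrite lef_pV2 ?posrE // (lt_le_trans c_gt0).
Qed.
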